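(* (Optimality within horizon.) Given a start location (product-graph state) $l_0$ of the robot at current time $t_0$ and a horizon length $H$, the plan generated by $\textsf{DT*}$ is optimal in terms of the number of cycles completed within the horizon: among all decision sequences consisting of shortest prefix paths and shortest suffix cycles in the reduced product graph starting at $l_0$ at time $t_0$ (with time-dependent edge costs reflecting the known dynamic obstacles), none completes more suffix cycles in the time interval $[t_0,t_0+H]$ than the generated plan.
   Context: Setting: a robot moves in a 2D grid modelled by a weighted transition system $T$ (cells, obstacle cells, moves left/right/up/down with positive time costs, atomic propositions labelling cells); an LTL task $\phi$ has B\''uchi automaton $B_\phi$ with accepting states $F$; the product graph of $T$ and $B_\phi$ is reduced to a graph $G_r=(V_r,v_0,E_r,F_r,w_r)$, $V_r\subseteq S_T\times S_B$, $F_r$ the nodes whose automaton component is in $F$, where edges represent shortest paths in the product graph. Dynamic obstacles make some cells unavailable for known time intervals, so edge costs are time-dependent (including waiting). From a node $l_i$ at time $t_i$ the available decisions are: traverse a shortest prefix path to some destination node $l_j\in F_r$, arriving at time $t_j$; or, if $l_i\in F_r$, traverse a shortest cycle from $l_i$ back to $l_i$, arriving at $t_j$ (this completes a cycle). $\textsf{DT*}$ encodes all such decision sequences starting at $l_0$ at time $t_0$ within the horizon $[t_0,t_0+H]$ as SMT constraints (Boolean variables $X_{l t}$ for being at $l$ at time $t$, exactly one successor decision per visited node, at most one location per time, no decision at intermediate times of an ongoing traversal) and asks the solver to lexicographically maximize the number of completed cycles, then minimize the length of the last completed cycle, then minimize the completion time of the last cycle. *)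

From mathcomp Require Import all_boot.
Set Implicit Arguments.
Unset Strict Implicit.
Unset Printing Implicit Defensive.

(* Reduced product graph G_r = (V_r, v_0, E_r, F_r, w_r) together with the
   time-dependent shortest-traversal oracles induced by the known dynamic
   obstacles (including waiting). *)
Record red_graph (V : finType) := RGraph {
  acc : pred V;
  pre_arr : V -> V -> nat -> option nat;     (* pre_arr li lj t = Some t' : leaving li at time t
                                                along a time-dependent shortest prefix path,
                                                one arrives at lj at time t' (None: unreachable) *)
  cyc_arr : V -> nat -> option nat           (* cyc_arr l t = Some t' : leaving l at time t along a
                                                time-dependent shortest cycle, one is back at l at t' *)
}.

(* A decision: shortest prefix path to a destination lj in F_r, or a shortest
   suffix cycle from the current (accepting) node back to itself. *)
Inductive decision (V : Type) := Pre of V | Cyc.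
Arguments Cyc {V}.

Definition is_cyc (V : Type) (o : option (decision V)) : bool :=
  if o is Some Cyc then true else false.

Definition step (V : finType) (G : red_graph V) (l : V) (t : nat) (d : decision V)
  : option (V * nat) :=
  match d with
  | Pre lj => if acc G lj then omap (fun t' => (lj, t')) (pre_arr G l lj t) else None
  | Cyc => if acc G l then omap (fun t' => (l, t')) (cyc_arr G l t) else None
  end.

Definition dstep (V : finType) (G : red_graph V) (l : V) (t : nat)
  (o : option (decision V)) : option (V * nat) :=
  if o is Some d then step G l t d else None.

Fixpoint valid_seq (V : finType) (G : red_graph V) (l : V) (t : nat)
  (ds : seq (decision V)) : bool :=
  match ds with
  | [::] => true
  | d :: ds' => if step G l t d is Some (l', t') then valid_seq G l' t' ds' else false
  end.

Fixpoint cycles_by (V : finType) (G : red_graph V) (T : nat) (l : V) (t : nat)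
  (ds : seq (decision V)) : nat :=
  match ds with
  | [::] => 0
  | d :: ds' =>
      if step G l t d is Some (l', t') then
        ((if d is Cyc then t' <= T else false) : nat) + cycles_by G T l' t' ds'
      else 0
  end.

(* ---------- The DT* SMT encoding ----------
   X l t : Boolean "robot is at node l at time t";
   Y l t : the (unique) successor decision taken at (l,t), None = no further decision. *)
Definition dt_valid (V : finType) (G : red_graph V) (l0 : V) (t0 H : nat)
  (X : V -> nat -> bool) (Y : V -> nat -> option (decision V)) : Prop :=
  [/\ X l0 t0,
      (forall l t, X l t -> t0 <= t <= t0 + H),
      (forall l l' t, X l t -> X l' t -> l = l'),
      (forall l t, X l t ->
         match Y l t with
         | None => forall l' s, t < s -> ~~ X l' s
         | Some d => exists l' t', [/\ step G l t d = Some (l', t'), t' <= t0 + H, X l' t'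
                                  & forall l'' s, t < s < t' -> ~~ X l'' s]
         end)
    &
      (forall l t, X l t -> (l, t) <> (l0, t0) ->
         exists l' s, [/\ X l' s, s < t & dstep G l' s (Y l' s) = Some (l, t)])].

Definition ncyc (V : finType) (t0 H : nat)
  (X : V -> nat -> bool) (Y : V -> nat -> option (decision V)) : nat :=
  \sum_(t < (t0 + H).+1) \sum_(l : V) (X l t && is_cyc (Y l t) : nat).

(* departure time of the last completed cycle (0 if none) *)
Definition last_cyc_dep (V : finType) (t0 H : nat)
  (X : V -> nat -> bool) (Y : V -> nat -> option (decision V)) : nat :=
  \max_(t < (t0 + H).+1 | [exists l : V, X l t && is_cyc (Y l t)]) (t : nat).

Definition last_cyc (V : finType) (G : red_graph V) (t0 H : nat)
  (X : V -> nat -> bool) (Y : V -> nat -> option (decision V)) : nat * nat :=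
  let tl := last_cyc_dep t0 H X Y in
  match [pick l : V | X l tl && is_cyc (Y l tl)] with
  | Some l => match cyc_arr G l tl with
              | Some ta => (ta - tl, ta)
              | None => (0, 0)
              end
  | None => (0, 0)
  end.

Definition dt_obj (V : finType) (G : red_graph V) (t0 H : nat)
  (X : V -> nat -> bool) (Y : V -> nat -> option (decision V)) : nat * nat * nat :=
  (ncyc t0 H X Y, (last_cyc G t0 H X Y).1, (last_cyc G t0 H X Y).2).

Definition lex_better (a b : nat * nat * nat) : bool :=
  (a.1.1 > b.1.1) ||
  ((a.1.1 == b.1.1) && ((a.1.2 < b.1.2) || ((a.1.2 == b.1.2) && (a.2 < b.2)))).

(* (X, Y) is a plan generated by DT*: a lexicographically optimal model of the encoding *)
Definition dt_optimal (V : finType) (G : red_graph V) (l0 : V) (t0 H : nat)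
  (X : V -> nat -> bool) (Y : V -> nat -> option (decision V)) : Prop :=
  dt_valid G l0 t0 H X Y /\
  forall X' Y', dt_valid G l0 t0 H X' Y' ->
    ~~ lex_better (dt_obj G t0 H X' Y') (dt_obj G t0 H X Y).

(* Any decision sequence, truncated at the horizon, is itself a model of the
   DT* encoding: mark the nodes it visits in time order and record the decision
   taken at each.  Such a model counts every cycle the sequence completes in
   time, so a lexicographically optimal model, which maximises the count
   first, counts at least as many. *)
From mathcomp Require Import all_boot.
Set Implicit Arguments.
Unset Strict Implicit.
Unset Printing Implicit Defensive.

Lemma lex_betterN_count (a b : nat * nat * nat) : ~~ lex_better a b -> a.1.1 <= b.1.1.
Proof. by rewrite /lex_better negb_or -leqNgt => /andP[]. Qed.

Section Encoding.
Variables (V : finType) (G : red_graph V).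

Hypothesis step_later :
  forall l t d l' t', step G l t d = Some (l', t') -> t < t'.

Lemma cycles_by_after T ds l t : T < t -> cycles_by G T l t ds = 0.
Proof.
elim: ds l t => [//|d ds IH] l t ltTt /=.
case E: (step G l t d) => [[l' t']|] //.
have ltTt' := ltn_trans ltTt (step_later E).
rewrite IH // addn0; case: d E => // _.
by rewrite leqNgt ltTt'.
Qed.

Definition at_only (l : V) (t : nat) : V -> nat -> bool :=
  fun l2 s => (l2 == l) && (s == t).

Definition no_decision : V -> nat -> option (decision V) := fun _ _ => None.

Definition prepend_visit l t (X : V -> nat -> bool) : V -> nat -> bool :=
  fun l2 s => at_only l t l2 s || X l2 s.

Definition prepend_decision l t d (Y : V -> nat -> option (decision V)) :
  V -> nat -> option (decision V) :=
  fun l2 s => if at_only l t l2 s then Some d else Y l2 s.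

Lemma dt_valid_at_only l t H : dt_valid G l t H (at_only l t) no_decision.
Proof.
split.
- by rewrite /at_only !eqxx.
- by move=> l2 s /andP[_ /eqP->]; rewrite leqnn leq_addr.
- by move=> a b s /andP[/eqP-> _] /andP[/eqP-> _].
- move=> l2 s /andP[_ /eqP->] l' s' lt_ts'.
  by apply/negP => /andP[_ /eqP Es']; rewrite Es' ltnn in lt_ts'.
- by move=> l2 s /andP[/eqP-> /eqP->].
Qed.

Section Prepend.
Variables (l l' : V) (t t' H H' : nat) (d : decision V).
Variables (X : V -> nat -> bool) (Y : V -> nat -> option (decision V)).
Hypothesis step_d : step G l t d = Some (l', t').
Hypothesis same_horizon : t' + H' = t + H.
Hypothesis valid_tail : dt_valid G l' t' H' X Y.

Let lt_tt' : t < t' := step_later step_d.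

Lemma tail_visits_after l2 s : X l2 s -> t < s.
Proof. by case: valid_tail => _ bounds _ _ _ /bounds /andP[/(leq_trans lt_tt')]. Qed.

Lemma not_at_only_later l2 s : t < s -> ~~ at_only l t l2 s.
Proof. by move=> lt_ts; rewrite /at_only (gtn_eqF lt_ts) andbF. Qed.

Lemma at_only_tail_visit l2 s : X l2 s -> at_only l t l2 s = false.
Proof. by move/tail_visits_after/(not_at_only_later l2)/negbTE. Qed.

Lemma prepend_decision_tail l2 s :
  X l2 s -> prepend_decision l t d Y l2 s = Y l2 s.
Proof. by move=> Xs; rewrite /prepend_decision at_only_tail_visit. Qed.

Lemma dt_valid_prepend :
  dt_valid G l t H (prepend_visit l t X) (prepend_decision l t d Y).
Proof.
case: valid_tail => X_start X_bounds X_uniq X_succ X_pred.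
split.
- by rewrite /prepend_visit /at_only !eqxx.
- move=> l2 s /orP[/andP[_ /eqP->]|/X_bounds]; first by rewrite leqnn leq_addr.
  rewrite same_horizon => /andP[le_t's ->].
  by rewrite (ltnW (leq_trans lt_tt' le_t's)).
- move=> a b s /orP[/andP[/eqP-> /eqP->]|Xa] /orP[/andP[/eqP-> /eqP Es]|Xb] //.
  + by have := tail_visits_after Xb; rewrite ltnn.
  + by have := tail_visits_after Xa; rewrite Es ltnn.
  + exact: X_uniq Xa Xb.
- move=> l2 s /orP[/andP[/eqP-> /eqP->]|Xs].
    rewrite /prepend_decision /at_only !eqxx /=.
    exists l', t'; split => //; first by rewrite -same_horizon leq_addr.
      by rewrite /prepend_visit X_start orbT.
    move=> l3 s' /andP[lt_ts' lt_s't']; rewrite negb_or not_at_only_later //=.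
    by apply/negP => /X_bounds /andP[]; rewrite leqNgt lt_s't'.
  rewrite prepend_decision_tail //; move: (X_succ _ _ Xs).
  have lt_ts := tail_visits_after Xs.
  case: (Y l2 s) => [d'|] /=.
    move=> [l3 [t3 [step3 le_t3 Xt3 gap3]]]; exists l3, t3; split => //.
    + by rewrite -same_horizon.
    + by rewrite /prepend_visit Xt3 orbT.
    move=> l4 s' /andP[lt_ss' lt_s't3].
    by rewrite negb_or not_at_only_later ?gap3 ?lt_ss' //; exact: ltn_trans lt_ts lt_ss'.
  move=> X_last l4 s' lt_ss'.
  by rewrite negb_or not_at_only_later ?X_last //; exact: ltn_trans lt_ts lt_ss'.
- move=> l2 s /orP[/andP[/eqP-> /eqP->] //|Xs] ne_start.
  have [[-> ->]|ne_tail] := eqVneq (l2, s) (l', t').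
    exists l, t; split => //; first by rewrite /prepend_visit /at_only !eqxx.
    by rewrite /prepend_decision /at_only !eqxx.
  have [l3 [s3 [Xs3 lt_s3s pred3]]] := X_pred _ _ Xs (elimN eqP ne_tail).
  exists l3, s3; split => //; first by rewrite /prepend_visit Xs3 orbT.
  by rewrite prepend_decision_tail.
Qed.

Lemma ncyc_prepend :
  ncyc t H (prepend_visit l t X) (prepend_decision l t d Y)
  = is_cyc (Some d) + ncyc t' H' X Y.
Proof.
have cyc_at s l2 : (prepend_visit l t X l2 s && is_cyc (prepend_decision l t d Y l2 s) : nat)
    = (at_only l t l2 s && is_cyc (Some d)) + (X l2 s && is_cyc (Y l2 s)).
  rewrite /prepend_visit /prepend_decision.
  case Xs: (X l2 s); first by rewrite at_only_tail_visit.
  by rewrite orbF /= addn0; case: ifP.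
rewrite /ncyc same_horizon.
under eq_bigr do rewrite (eq_bigr _ (fun l2 _ => cyc_at _ l2)) big_split.
rewrite big_split /=; congr (_ + _).
have at_t s : \sum_l2 (at_only l t l2 s && is_cyc (Some d) : nat)
    = (s == t) * is_cyc (Some d).
  rewrite (bigD1 l) //= big1 => [|l2 /negbTE ne_l2]; last by rewrite /at_only ne_l2.
  by rewrite /at_only eqxx addn0; case: (s == t); rewrite ?mul1n.
have le_tT : t < (t + H).+1 by rewrite ltnS leq_addr.
under eq_bigr do rewrite at_t.
rewrite (bigD1 (Ordinal le_tT)) //= eqxx mul1n big1 ?addn0 // => s ne_s.
by move: ne_s; rewrite -(inj_eq val_inj) => /negbTE ->.
Qed.

End Prepend.

Lemma dt_encoding_of_seq ds l t H : exists X Y,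
  dt_valid G l t H X Y /\ cycles_by G (t + H) l t ds <= ncyc t H X Y.
Proof.
elim: ds l t H => [|d ds IH] l t H.
  by exists (at_only l t), no_decision; split; first exact: dt_valid_at_only.
case E: (step G l t d) => [[l' t']|]; last first.
  by exists (at_only l t), no_decision; rewrite /= E; split; first exact: dt_valid_at_only.
have [le_t'T|lt_Tt'] := leqP t' (t + H); last first.
  exists (at_only l t), no_decision; split; first exact: dt_valid_at_only.
  by rewrite /= E cycles_by_after // addn0; case: d E => // _; rewrite (leqNgt t') lt_Tt'.
have horizon : t' + (t + H - t') = t + H by rewrite subnKC.
have [X [Y [valid_XY count_XY]]] := IH l' t' (t + H - t').
exists (prepend_visit l t X), (prepend_decision l t d Y); split.
  exact: dt_valid_prepend E horizon valid_XY.
rewrite horizon in count_XY.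
rewrite (ncyc_prepend E horizon valid_XY) /= E leq_add //.
by case: d E => //= _; rewrite le_t'T.
Qed.

End Encoding.

Lemma step_later_of_positive_costs (V : finType) (G : red_graph V) :
  (forall li lj t t', pre_arr G li lj t = Some t' -> t < t') ->
  (forall l t t', cyc_arr G l t = Some t' -> t < t') ->
  forall l t d l' t', step G l t d = Some (l', t') -> t < t'.
Proof.
move=> pre_pos cyc_pos l t [lj|] l' t' /=.
  by case: (acc G lj) => //; case E: (pre_arr G l lj t) => [u|] //= [_ <-]; exact: pre_pos E.
by case: (acc G l) => //; case E: (cyc_arr G l t) => [u|] //= [_ <-]; exact: cyc_pos E.
Qed.

Theorem theorem2 (V : finType) (G : red_graph V) (l0 : V) (t0 H : nat)
  (pre_pos : forall li lj t t', pre_arr G li lj t = Some t' -> t < t')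
  (cyc_pos : forall l t t', cyc_arr G l t = Some t' -> t < t')
  (X : V -> nat -> bool) (Y : V -> nat -> option (decision V)) :
  dt_optimal G l0 t0 H X Y ->
  forall ds : seq (decision V), valid_seq G l0 t0 ds ->
    cycles_by G (t0 + H) l0 t0 ds <= ncyc t0 H X Y.
Proof.
(* [cycles_by] stops counting at the first infeasible decision, so [ds] need not be valid. *)
move=> [_ optimal] ds _.
have step_later := step_later_of_positive_costs pre_pos cyc_pos.
have [X' [Y' [valid' count']]] := dt_encoding_of_seq step_later ds l0 t0 H.
exact: leq_trans count' (lex_betterN_count (optimal _ _ valid')).
Qed.
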